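(* Let $G=(V,E)$ be a strongly connected digraph and $s\in V$. Then every auxiliary graph $G_r$ (for $r$ the root of a subtree $T(r)$ that is not a leaf of $D(s)$) is strongly connected.
   Context: For a digraph $G=(V,E)$ and $s\in V$ with every vertex reachable from $s$: $u$ dominates $w$ in the flow graph $G(s)$ if every path from $s$ to $w$ contains $u$; the dominator tree $D(s)$ is the rooted tree on $V$ with root $s$ in which $u$ is an ancestor of $w$ iff $u$ dominates $w$; $d(w)$ is the parent of $w\neq s$. An edge $(u,w)$ is a bridge of $G(s)$ if every path from $s$ to $w$ contains it (then $u=d(w)$). A vertex $w\neq s$ is marked if $(d(w),w)$ is a bridge. Deleting from $D(s)$ all edges $(d(w),w)$ with $w$ marked decomposes $D(s)$ into subtrees rooted at $s$ or at marked vertices; $T(v)$ is the subtree containing $v$. A vertex $x\in T(r)$ is a boundary vertex of $T(r)$ if $x$ has a marked child in $D(s)$. Auxiliary graph: for a subtree root $r$ that is not a leaf of $D(s)$, $G_r=(V_r,E_r)$ has ordinary vertices $V_r^o$ = the vertices of $T(r)$ and auxiliary vertices $V_r^a$ consisting of: a copy of each marked child $z$ of each boundary vertex $x$ of $T(r)$ (with the edge $(x,z)$ in $E_r$), and, if $r\neq s$, a copy of $d(r)$ (with the edge $(d(r),r)$ in $E_r$). $E_r$ further contains all edges of $E$ with both endpoints in $T(r)$, plus the following shortcut edges, for each $(u,v)\in E$: (a) if $u\in T(r)$ and $v$ is not a descendant of $r$ in $D(s)$, the edge $(u,d(r))$; (b) if $v\in T(r)$ and $u$ is a descendant in $D(s)$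 of a marked child $z$ of a boundary vertex of $T(r)$, the edge $(z,v)$; (c) if $u$ is a descendant in $D(s)$ of a marked child $z$ of a boundary vertex of $T(r)$ and $v$ is not a descendant of $r$ in $D(s)$, the edge $(z,d(r))$. Parallel duplicate edges are not kept. *)

From mathcomp Require Import all_boot.
From Stdlib Require Import Relations.
Set Implicit Arguments. Unset Strict Implicit. Unset Printing Implicit Defensive.

Section Dominators.
Variables (V : finType) (E : rel V) (s : V).

Definition strongly_connected : Prop := forall x y : V, connect E x y.

Definition dominates (u w : V) : Prop :=
  forall p : seq V, path E s p -> last s p = w -> u \in s :: p.

(* u = d(w): u is the parent of w in the dominator tree D(s), i.e. the
   immediate dominator of w (the proper dominator of w dominated by all
   proper dominators of w). *)
Definition idom (u w : V) : Prop :=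
  u <> w /\ dominates u w /\ (forall x, dominates x w -> x <> w -> dominates x u).

Definition bridge (u w : V) : Prop :=
  E u w /\
  forall p : seq V, path E s p -> last s p = w -> infix [:: u; w] (s :: p).

Definition marked (w : V) : Prop :=
  w <> s /\ exists u, idom u w /\ bridge u w.

Definition subtree_root (r : V) : Prop := r = s \/ marked r.

Definition inT (r v : V) : Prop :=
  dominates r v /\
  (forall z, marked z -> z <> r -> dominates r z -> ~ dominates z v).

Definition aux_child (r z : V) : Prop :=
  marked z /\ exists x, inT r x /\ idom x z.

(* vertex set V_r of G_r (as a subset of V: the auxiliary vertices, i.e. the
   marked children of boundary vertices and d(r), are not in T(r), so the
   "copies" are represented by the vertices themselves). *)
Definition Vr (r x : V) : Prop :=
  inT r x \/ aux_child r x \/ (r <> s /\ idom x r).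

Definition Er (r x y : V) : Prop :=
  (inT r x /\ inT r y /\ E x y)
  \/ (inT r x /\ idom x y /\ marked y)
  \/ (r <> s /\ idom x r /\ y = r)
  \/ (inT r x /\ idom y r /\ exists v, E x v /\ ~ dominates r v)
  \/ (aux_child r x /\ inT r y /\ exists u, E u y /\ dominates x u)
  \/ (aux_child r x /\ idom y r /\
      exists u v, E u v /\ dominates x u /\ ~ dominates r v).

(* G_r is strongly connected: every vertex of V_r reaches every other one
   using edges of E_r (which only join vertices of V_r). *)
Definition aux_strongly_connected (r : V) : Prop :=
  forall x y, Vr r x -> Vr r y -> clos_refl_trans V (Er r) x y.

End Dominators.

From mathcomp Require Import all_boot.
From Stdlib Require Import Relations Classical.

(* Every vertex y of G has a representative in G_r: y itself if y lies in
   T(r), the auxiliary child z whose subtree in D(s) contains y, or d(r) if y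
   is not a descendant of r.  An edge (x, y) of G either joins two vertices
   with the same representative or maps to an edge of E_r: a path can enter
   the dominator subtree of a vertex only through that vertex, and the subtree
   of a marked vertex z only through the bridge (d(z), z).  So the image of a
   path of the strongly connected graph G between vertices of V_r is a walk
   in G_r. *)

Set Implicit Arguments. Unset Strict Implicit. Unset Printing Implicit Defensive.

Section PathSplitting.
Variables (T : eqType) (e : rel T).

Lemma last_take_index (x0 x : T) (p : seq T) : x \in x0 :: p ->
  last x0 (take (index x (x0 :: p)) p) = x.
Proof.
move=> xp; set i := index x (x0 :: p).
have ilt : i < (size p).+1 by rewrite index_mem.
rewrite (last_nth x0) size_takel //.
have -> : x0 :: take i p = take i.+1 (x0 :: p) by [].
by rewrite nth_take // nth_index.
Qed.

Lemma path_suffix_from (x0 x : T) (p : seq T) : path e x0 p -> x \in x0 :: p ->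
  exists2 q, path e x q & [/\ last x q = last x0 p, x \notin q & {subset q <= p}].
Proof.
move=> ep xp; case/splitPl: xp ep => p1 p2 lp1; rewrite cat_path last_cat lp1.
case/andP=> _; case/shortenP=> q eq /andP[xq _] qp2; exists q => //.
by split=> // y /qp2; rewrite mem_cat orbC => ->.
Qed.

Lemma infix_pair_rcons (x u z : T) (c : seq T) : z \notin x :: c ->
  infix [:: u; z] (rcons (x :: c) z) -> u = last x c.
Proof.
move=> zc /infixP[s1 [s2 t_eq]]; case/lastP: s2 t_eq => [|s2 y].
  rewrite cats0 -cat_rcons cats1 => /rcons_inj[xc].
  by rewrite -[last x c]/(last x (x :: c)) xc last_rcons.
rewrite -[_ ++ rcons s2 y]/(rcons [:: u, z & s2] y) -rcons_cat => /rcons_inj[xc].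
by rewrite xc mem_cat !inE eqxx !orbT in zc.
Qed.

End PathSplitting.

Section Dominators.
Variables (V : finType) (E : rel V) (s : V).
Hypothesis reachable : forall w, connect E s w.

Local Notation dom := (dominates E s).

Lemma path_to w : exists2 p, path E s p & last s p = w.
Proof. by case/connectP: (reachable w) => p ep ->; exists p. Qed.

Lemma path_avoiding u w : ~ dom u w ->
  exists p, [/\ path E s p, last s p = w & u \notin s :: p].
Proof.
move=> ndom; apply: NNPP => noavoid; apply: ndom => p ep lp.
by apply: contraT => up; case: noavoid; exists p.
Qed.

Lemma dom_refl w : dom w w.
Proof. by move=> p _ <-; apply: mem_last. Qed.

Lemma dom_root w : dom s w.
Proof. by move=> p _ _; apply: mem_head. Qed.

Lemma dom_index_le p a b : path E s p -> b \in s :: p -> dom a b ->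
  index a (s :: p) <= index b (s :: p).
Proof.
move=> ep bp dab; rewrite -ltnS; apply: index_ltn.
exact: dab (take_path _ ep) (last_take_index bp).
Qed.

Lemma dom_mem p a b : path E s p -> b \in s :: p -> dom a b -> a \in s :: p.
Proof.
move=> ep bp dab; rewrite -index_mem.
by apply: leq_ltn_trans (dom_index_le ep bp dab) _; rewrite index_mem.
Qed.

Lemma dom_index_lt p a b : path E s p -> b \in s :: p -> dom a b -> a <> b ->
  index a (s :: p) < index b (s :: p).
Proof.
move=> ep bp dab nab; rewrite ltn_neqAle dom_index_le // andbT.
apply/eqP=> eq_idx; apply: nab.
by rewrite -(nth_index s bp) -eq_idx nth_index // (dom_mem ep bp dab).
Qed.

Lemma dom_trans a b c : dom a b -> dom b c -> dom a c.
Proof. by move=> dab dbc p ep lp; apply: dom_mem ep (dbc p ep lp) dab. Qed.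

Lemma dom_antisym a b : dom a b -> dom b a -> a = b.
Proof.
move=> dab dba; apply: NNPP => nab.
have [p ep lp] := path_to b; have bp : b \in s :: p by rewrite -lp mem_last.
have ap := dom_mem ep bp dab.
have := dom_index_lt ep ap dba (nesym nab).
by rewrite ltnNge ltnW // (dom_index_lt ep bp dab nab).
Qed.

Lemma dom_path_from u w y q : dom u y -> ~ dom u w ->
  path E w q -> last w q = y -> u \in q.
Proof.
move=> duy nduw eq lq; have [p [ep lp up]] := path_avoiding nduw.
have := duy (p ++ q); rewrite cat_path ep lp eq last_cat lp lq -cat_cons mem_cat.
by rewrite (negPf up); apply.
Qed.

Lemma dom_total a b y : dom a y -> dom b y -> dom a b \/ dom b a.
Proof.
move=> day dby; apply: NNPP => /not_or_and[ndab ndba].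
have [p ep lp] := path_to y.
have [q1 eq1 [lq1 bq1 _]] := path_suffix_from ep (dby p ep lp).
have aq1 : a \in q1 by apply: dom_path_from day ndab eq1 _; rewrite lq1.
have aq1' : a \in b :: q1 by rewrite inE aq1 orbT.
have [q2 eq2 [lq2 _ q21]] := path_suffix_from eq1 aq1'.
have bq2 : b \in q2 by apply: dom_path_from dby ndba eq2 _; rewrite lq2 lq1.
by rewrite (q21 _ bq2) in bq1.
Qed.

Lemma dom_entry x y z : dom z y -> ~ dom z x -> E x y -> y = z.
Proof.
move=> dzy ndzx exy.
have := dom_path_from dzy ndzx (_ : path E x [:: y]) erefl.
by rewrite /= exy inE => /(_ isT) /eqP.
Qed.

Lemma bridge_entry x u z : bridge E s u z -> ~ dom z x -> E x z -> x = u.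
Proof.
move=> [_ brg] ndzx exz; have [p [ep lp zp]] := path_avoiding ndzx.
have := brg (rcons p z); rewrite rcons_path ep lp exz last_rcons -rcons_cons.
by move=> /(_ isT erefl) /(infix_pair_rcons zp); rewrite lp.
Qed.

Lemma idom_uniq u1 u2 w : idom E s u1 w -> idom E s u2 w -> u1 = u2.
Proof.
by move=> [n1 [d1 h1]] [n2 [d2 h2]]; apply: dom_antisym; [apply: h2 | apply: h1].
Qed.

Lemma marked_entry x y z : marked E s z -> dom z y -> ~ dom z x -> E x y ->
  y = z /\ idom E s x z.
Proof.
move=> [_ [u [iu bu]]] dzy ndzx exy; have yz := dom_entry dzy ndzx exy.
by rewrite yz in exy; rewrite (bridge_entry bu ndzx exy).
Qed.

End Dominators.

Section AuxiliaryGraph.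
Variables (V : finType) (E : rel V) (s r : V).
Hypothesis reachable : forall w, connect E s w.

Local Notation dom := (dominates E s).

Definition rep (y p : V) : Prop :=
  (inT E s r y /\ p = y) \/ (aux_child E s r p /\ dom p y) \/
  (~ dom r y /\ idom E s p r).

Lemma aux_child_below z :
  aux_child E s r z -> [/\ dom r z, z <> r & marked E s z].
Proof.
move=> [mz [x [[drx _] [nxz [dxz _]]]]]; split=> //.
  exact: dom_trans drx dxz.
by move=> zr; apply: nxz; apply: (dom_antisym reachable dxz); rewrite zr.
Qed.

Lemma aux_region_notin_T z y : aux_child E s r z -> dom z y -> ~ inT E s r y.
Proof.
by move=> /aux_child_below[drz nzr mz] dzy [_ Ty]; apply: Ty z mz nzr drz dzy.
Qed.

Lemma aux_child_dom_eq z1 z2 : aux_child E s r z1 -> aux_child E s r z2 ->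
  dom z1 z2 -> z1 = z2.
Proof.
move=> /aux_child_below[dr1 n1 m1] [_ [x [[_ Tx] [_ [_ hx2]]]]] d12.
by apply: NNPP => n12; apply: (Tx z1 m1 n1 dr1); apply: hx2.
Qed.

Lemma aux_child_uniq z1 z2 y : aux_child E s r z1 -> aux_child E s r z2 ->
  dom z1 y -> dom z2 y -> z1 = z2.
Proof.
move=> a1 a2 d1 d2; case: (dom_total reachable d1 d2) => d12.
  exact: aux_child_dom_eq.
by symmetry; apply: aux_child_dom_eq.
Qed.

Lemma rep_fun y p1 p2 : rep y p1 -> rep y p2 -> p1 = p2.
Proof.
have below_r z y' : aux_child E s r z -> dom z y' -> dom r y'.
  by move=> /aux_child_below[drz _ _]; apply: dom_trans.
case=> [[t1 ->]|[[a1 d1]|[n1 i1]]]; case=> [[t2 ->]|[[a2 d2]|[n2 i2]]] //.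
- by case: (aux_region_notin_T a2 d2 t1).
- by case: n2; case: t1.
- by case: (aux_region_notin_T a1 d1 t2).
- exact: aux_child_uniq a1 a2 d1 d2.
- by case: n2; apply: below_r a1 d1.
- by case: n1; case: t2.
- by case: n1; apply: below_r a2 d2.
- exact: (idom_uniq reachable i1 i2).
Qed.

Lemma rep_Vr x : Vr E s r x -> rep x x.
Proof.
case=> [Tx|[ax|[_ ixr]]]; first by left.
  by right; left; split=> //; apply: dom_refl.
right; right; split=> // drx; case: ixr => nxr [dxr _].
by apply: nxr; apply: (dom_antisym reachable dxr drx).
Qed.

Lemma marked_between y : dom r y -> ~ inT E s r y ->
  exists z, [/\ marked E s z, z <> r, dom r z & dom z y].
Proof.
move=> dry nTy; apply: NNPP => nz; apply: nTy; split=> // z mz nzr drz dzy.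
by apply: nz; exists z.
Qed.

(* Induction: if the parent d(z) of z is not in T(r), climb to a marked vertex
   between r and d(z); this strictly decreases the position on a path s ~> y. *)
Lemma aux_child_above y : dom r y -> ~ inT E s r y ->
  exists2 z, aux_child E s r z & dom z y.
Proof.
move=> dry /(marked_between dry)[z [mz nzr drz dzy]].
have [R eR lR] := path_to reachable y.
have yR : y \in s :: R by rewrite -lR mem_last.
move en: (index z (s :: R)) => n.
elim/ltn_ind: n z en mz nzr drz dzy => n IH z zn mz nzr drz dzy.
have [_ [u [[nuz [duz hu]] _]]] := mz.
have dru : dom r u by apply: hu => // ezr; apply: nzr.
have [Tu|] := classic (inT E s r u).
  by exists z => //; split=> //; exists u.
move=> /(marked_between dru)[z1 [m1 n1r dr1 d1u]].
have d1z := dom_trans d1u duz.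
have n1z : z1 <> z.
  by move=> ez; apply: nuz; apply: (dom_antisym reachable duz); rewrite -ez.
apply: (IH (index z1 (s :: R)) _ z1) => //; last exact: dom_trans d1z dzy.
by rewrite -zn; apply: (dom_index_lt eR (dom_mem eR yR dzy) d1z n1z).
Qed.

Local Notation walk := (clos_refl_trans V (Er E s r)).

Lemma edge_rep x y px py : E x y -> rep x px -> rep y py -> walk px py.
Proof.
move=> exy.
case=> [[Tx ->]|[[ax dx]|[nx ix]]]; case=> [[Ty ->]|[[ay dy]|[ny iy]]].
- by apply: rt_step; left.
- have [_ _ my] := aux_child_below ay.
  have ndx : ~ dom py x by move=> dpx; apply: aux_region_notin_T ay dpx Tx.
  have [_ ixp] := marked_entry my dy ndx exy.
  by apply: rt_step; right; left.
- by apply: rt_step; do 3 right; left; split=> //; split=> //; exists y.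
- by apply: rt_step; do 4 right; left; split=> //; split=> //; exists x.
- have [dpx|ndpx] := classic (dom py x).
    by rewrite (aux_child_uniq ax ay dx dpx); apply: rt_refl.
  have [_ _ my] := aux_child_below ay.
  have [_ ixp] := marked_entry my dy ndpx exy.
  (* the parent of py lies in T(r), so x cannot be below px *)
  have [_ [x' [Tx' ix'p]]] := ay.
  by case: (aux_region_notin_T ax dx); rewrite (idom_uniq reachable ixp ix'p).
- by apply: rt_step; do 5 right; split=> //; split=> //; exists x, y.
- have dry : dom r y by case: Ty.
  have yr := dom_entry dry nx exy.
  apply: rt_step; do 2 right; left; split=> // rs.
  by apply: nx; rewrite rs; apply: dom_root.
- have [dry nyr _] := aux_child_below ay.
  have yr := dom_entry (dom_trans dry dy) nx exy.
  by case: nyr; apply: (dom_antisym reachable _ dry); rewrite -yr.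
- by rewrite (idom_uniq reachable ix iy); apply: rt_refl.
Qed.

Hypothesis root_r : subtree_root E s r.

Lemma rep_exists y : exists p, rep y p.
Proof.
have [dry|ndry] := classic (dom r y); last first.
  case: root_r => [rs|[_ [u [iu _]]]]; last by exists u; right; right.
  by case: ndry; rewrite rs; apply: dom_root.
have [Ty|nTy] := classic (inT E s r y); first by exists y; left.
by have [z az dzy] := aux_child_above dry nTy; exists z; right; left.
Qed.

Lemma path_rep x p px : path E x p -> rep x px ->
  exists2 py, rep (last x p) py & walk px py.
Proof.
elim: p x px => [|y p IH] x px /=.
  by move=> _ rx; exists px => //; apply: rt_refl.
case/andP=> exy ep rx; have [py ry] := rep_exists y.
have [pz rz wz] := IH y py ep ry; exists pz => //.
exact: rt_trans (edge_rep exy rx ry) wz.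
Qed.

End AuxiliaryGraph.

Theorem mainTheorem9 (V : finType) (E : rel V) (s : V) :
  strongly_connected E ->
  forall r : V, subtree_root E s r ->
  (* r is not a leaf of D(s) *)
  (exists w, idom E s r w) ->
  aux_strongly_connected E s r.
Proof.
move=> sc r root_r _ x y Vx.
have reachable w : connect E s w := sc s w.
case/connectP: (sc x y) => p ep -> Vy.
have [py ry walk_xy] := path_rep reachable root_r ep (rep_Vr reachable Vx).
by rewrite (rep_fun reachable (rep_Vr reachable Vy) ry).
Qed.
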